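(* Let $\hat{r}^{\mathsf{mom}}_n$ be the median-of-means estimate of the regression function $r$ constructed on $m$ blocks with an arbitrary base estimate $\hat{r}_N$. Then for all $x\in\mathbb{R}^d$ and all $t\geq 0$, \[ \mathbb{P}\left(\left|\hat{r}^{\mathsf{mom}}_n(x)-r(x)\right|\geq t\right)\leq 2^m\, p_t(x)^{m/2}, \qquad\text{where } p_t(x):=\mathbb{P}\left(\left|\hat{r}_N(x)-r(x)\right|\geq t\right), \] and $\hat{r}_N(x)=\hat{r}_N(x,\mathcal{D}_N)$ denotes the base estimate computed on an i.i.d. sample $\mathcal{D}_N$ of size $N$ with the law of $(X,Y)$.
   Context: Let $(X,Y)$ be a random pair with $X\in\mathbb{R}^d$ ($d\geq1$) of law $\mu$ and $Y$ real-valued with $\mathbb{E}[Y^2]<\infty$; the regression function is $r(x)=\mathbb{E}[Y\mid X=x]$. Let $\mathcal{D}_n=((X_1,Y_1),\dots,(X_n,Y_n))$ be i.i.d. copies of $(X,Y)$. For $m\in\{1,\dots,n\}$, let $N=\lfloor n/m\rfloor$ and let $\mathcal{D}^{(1)},\dots,\mathcal{D}^{(m)}$ be $m$ disjoint subsets of $\mathcal{D}_n$, each consisting of $N$ observations (remaining observations are discarded). A base estimate is a map $\hat{r}_N(x,\cdot)$ taking a sample of size $N$ and returning a real number; set $\hat{r}^{(j)}(x)=\hat{r}_N(x,\mathcal{D}^{(j)})$. The median-of-means estimate is $\hat{r}^{\mathsf{mom}}_n(x)=\mathsf{median}(\hat{r}^{(1)}(x),\dots,\hat{r}^{(m)}(x))$,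 where $\mathsf{median}(r_1,\dots,r_m)=r_{(\lceil m/2\rceil)}$ is the $\lceil m/2\rceil$-th smallest of the values. *)

From HB Require Import structures.
From mathcomp Require Import all_boot all_order all_algebra.
From mathcomp Require Import all_classical all_reals all_analysis.
Set Implicit Arguments. Unset Strict Implicit. Unset Printing Implicit Defensive.
Import Order.TTheory GRing.Theory Num.Theory.
Import numFieldNormedType.Exports.
Local Open Scope classical_set_scope.
Local Open Scope ring_scope.

Definition obs (R : realType) (d : nat) := (d.-tuple R * R)%type.

Section defs.
Context {R : realType} {dT : measure_display} {T : measurableType dT}.
Variable P : probability T R.

Definition mutually_independent {dS} {S : measurableType dS} (k : nat)
  (Z : 'I_k -> T -> S) : Prop :=
  forall A : 'I_k -> set S, (forall i, measurable (A i)) ->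
    P (\bigcap_(i in [set: 'I_k]) (Z i @^-1` A i)) =
    (\prod_(i < k) P (Z i @^-1` A i))%E.

Definition same_law {dS} {S : measurableType dS} (U V : T -> S) : Prop :=
  forall A : set S, measurable A -> P (U @^-1` A) = P (V @^-1` A).

Definition iid_copies {dS} {S : measurableType dS} (k : nat)
  (Z : 'I_k -> T -> S) (V : T -> S) : Prop :=
  (forall i, measurable_fun setT (Z i)) /\ mutually_independent Z /\
  (forall i, same_law (Z i) V).

(* r is (a version of) the regression function x |-> E[Y | X = x] *)
Definition is_regression_function (d : nat) (XY : T -> obs R d)
  (r : d.-tuple R -> R) : Prop :=
  measurable_fun setT r /\
  P.-integrable setT (fun w => (XY w).2%:E) /\
  forall B : set (d.-tuple R), measurable B ->
    (\int[P]_(w in (fun w => (XY w).1) @^-1` B) ((XY w).2)%:E =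
     \int[P]_(w in (fun w => (XY w).1) @^-1` B) (r (XY w).1)%:E)%E.
End defs.

(* median(r_1,...,r_m) = r_(ceil(m/2)), the ceil(m/2)-th smallest value *)
Definition median {R : realType} (s : seq R) : R :=
  nth 0 (sort <=%R s) (uphalf (size s)).-1.

Definition mom {R : realType} {T : Type} (d m N : nat)
  (rN : d.-tuple R -> N.-tuple (obs R d) -> R)
  (D : 'I_m -> T -> N.-tuple (obs R d)) (x : d.-tuple R) (w : T) : R :=
  median [seq rN x (D j w) | j <- enum 'I_m].

From mathcomp Require Import all_boot all_order all_algebra.
From mathcomp Require Import all_classical all_reals all_analysis.
From mathcomp Require Import finmap measurable_realfun zify lra.
Set Implicit Arguments. Unset Strict Implicit. Unset Printing Implicit Defensive.
Import Order.TTheory GRing.Theory Num.Theory.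
Local Open Scope classical_set_scope.
Local Open Scope ring_scope.

(* If the median of the m block estimates is at distance at least t from r(x),
   then so are at least ceil(m/2) of them.  The median event is thus covered by
   the at most 2^m events "every block of J is far" with #|J| >= ceil(m/2).
   The blocks are built on disjoint sets of i.i.d. observations, so they are
   independent copies of D_N (a pi-lambda argument on boxes of N-tuples), and
   each of these events has probability p_t(x)^#|J| <= p_t(x)^(m/2). *)

Section tuple_boxes.
Context {dS} {S : measurableType dS} {N : nat}.

Definition box (A : 'I_N -> set S) : set (N.-tuple S) :=
  [set z | forall k, A k (tnth z k)].

Definition boxes : set (set (N.-tuple S)) :=
  [set X | exists2 A : 'I_N -> set S, (forall k, measurable (A k)) & X = box A].

Lemma measurable_box (A : 'I_N -> set S) :
  (forall k, measurable (A k)) -> measurable (box A).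
Proof.
move=> mA; have -> : box A = \bigcap_(k in [set: 'I_N]) ((@tnth N S)^~ k @^-1` A k).
  by apply/seteqP; split => z zA k => [_|]; [exact: zA|exact: zA k I].
apply: fin_bigcap_measurable => // k _.
by rewrite -[X in measurable X]setTI; exact: measurable_tnth.
Qed.

Lemma boxesT : boxes setT.
Proof. by exists (fun=> setT) => //; apply/seteqP; split. Qed.

Lemma setI_closed_boxes : setI_closed boxes.
Proof.
move=> _ _ [A mA ->] [B mB ->]; exists (fun k => A k `&` B k) => [k|].
  exact: measurableI.
apply/seteqP; split => z /=; first by move=> [zA zB] k.
by move=> zAB; split => k; case: (zAB k).
Qed.

Lemma measurable_tuple_boxes : @measurable _ (N.-tuple S) = <<s boxes >>.
Proof.
apply/seteqP; split; last first.
  apply: smallest_sub; first exact: sigma_algebra_measurable.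
  by move=> _ [A mA ->]; exact: measurable_box.
apply: smallest_sub; first exact: smallest_sigma_algebra.
apply: (big_ind (fun U => U `<=` <<s boxes >>)) => //.
  by move=> U V UG VG X [/UG|/VG].
move=> i _ _ [B mB <-]; apply: sub_sigma_algebra.
exists (fun k => if k == i then B else setT); first by move=> k; case: ifP.
apply/seteqP; split => z /=; last by move=> /(_ i); rewrite eqxx.
by move=> [_ Bz] k; case: ifPn => // /eqP ->.
Qed.

Lemma finite_measure_tuple_unique (R : realType)
    (mu nu : {measure set (N.-tuple S) -> \bar R}) :
  {in boxes, mu =1 nu} -> (mu setT < +oo)%E ->
  forall X, measurable X -> mu X = nu X.
Proof.
move=> munu mu_fin X mX.
apply: (measure_unique boxes (fun=> setT)) => //.
- exact: measurable_tuple_boxes.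
- exact: setI_closed_boxes.
- by move=> _; exact: boxesT.
- by rewrite bigcup_const.
- by move=> B /mem_set; exact: munu.
Qed.

End tuple_boxes.

Lemma measurable_fun_mktuple {dT dS} {T : measurableType dT} {S : measurableType dS}
    N (Z : 'I_N -> T -> S) :
  (forall k, measurable_fun setT (Z k)) ->
  measurable_fun setT (fun w => [tuple Z k w | k < N]).
Proof.
move=> mZ; apply/measurable_fun_tnthP => k.
by rewrite (_ : _ \o _ = Z k) //; apply: funext => w /=; rewrite tnth_mktuple.
Qed.

Section iid_blocks.
Context (R : realType) (dT : measure_display) (T : measurableType dT).
Variable P : probability T R.
Context {dS} (S : measurableType dS).

Lemma iid_tuple_box (N : nat) (W : 'I_N -> T -> S) (V : T -> S)
    (A : 'I_N -> set S) :
  iid_copies P W V -> (forall k, measurable (A k)) ->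
  P ((fun w => [tuple W k w | k < N]) @^-1` box A) =
  (\prod_(k < N) P (V @^-1` A k))%E.
Proof.
move=> [_ [indW lawW]] mA.
have -> : (fun w => [tuple W k w | k < N]) @^-1` box A =
    \bigcap_(k in [set: 'I_N]) (W k @^-1` A k).
  apply/seteqP; split => w /= wA k; last by rewrite tnth_mktuple; exact: wA.
  by move=> _; move: (wA k); rewrite tnth_mktuple.
by rewrite indW //; apply: eq_bigr => k _; rewrite lawW.
Qed.

Variables (n m N : nat) (Z : 'I_n -> T -> S) (V : T -> S) (W : 'I_N -> T -> S).
Variable blk : 'I_m -> 'I_N -> 'I_n.
Hypotheses (iidZ : iid_copies P Z V) (iidW : iid_copies P W V).
Hypothesis blk_inj : forall j k j' k', blk j k = blk j' k' -> j = j' /\ k = k'.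

Let block (j : 'I_m) w := [tuple Z (blk j k) w | k < N].
Let sample w := [tuple W k w | k < N].

Let factorizes (C : 'I_m -> set (N.-tuple S)) :=
  P (\bigcap_(j in [set: 'I_m]) (block j @^-1` C j)) =
  (\prod_(j < m) P (sample @^-1` C j))%E.

Lemma blocks_factorize_boxes (A : 'I_m -> 'I_N -> set S) :
  (forall j k, measurable (A j k)) -> factorizes (fun j => box (A j)).
Proof.
move=> mA; rewrite /factorizes; pose h (jk : 'I_m * 'I_N) := blk jk.1 jk.2.
have h_inj : injective h by move=> [j k] [j' k'] /blk_inj [/= -> ->].
(* A' i is the constraint put on observation i; unused observations are free. *)
pose A' i := if [pick jk | h jk == i] is Some jk then A jk.1 jk.2 else setT.
have A'h jk : A' (h jk) = A jk.1 jk.2.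
  by rewrite /A'; case: pickP => [jk' /eqP /h_inj -> //|/(_ jk)]; rewrite eqxx.
have -> : \bigcap_(j in [set: 'I_m]) (block j @^-1` box (A j)) =
    (fun w => [tuple Z i w | i < n]) @^-1` box A'.
  apply/seteqP; split => w /= wA.
    move=> i; rewrite tnth_mktuple /A'; case: pickP => // -[j k] /eqP <-.
    by move: (wA j I k); rewrite tnth_mktuple.
  move=> j _ k; rewrite tnth_mktuple.
  by move: (wA (h (j, k))); rewrite tnth_mktuple A'h.
rewrite (iid_tuple_box iidZ); last by move=> i; rewrite /A'; case: pickP.
under [RHS]eq_bigr do rewrite (iid_tuple_box iidW) //.
rewrite pair_big /= (bigID (mem (h @: [set: _])%SET)) /= [X in (_ * X)%E]big1 ?mule1.
  rewrite big_imset /=; last by move=> ? ? _ _ /h_inj.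
  by apply: eq_big => [jk|jk _]; rewrite ?finset.in_setT ?A'h.
move=> i hi; rewrite /A'; case: pickP => [jk /eqP hjk|_].
  by move: hi; rewrite -hjk imset_f.
by rewrite preimage_setT probability_setT.
Qed.

Lemma factorizes_update (C : 'I_m -> set (N.-tuple S)) (j0 : 'I_m) :
  (forall j, measurable (C j)) ->
  (forall D, boxes D -> factorizes [eta C with j0 |-> D]) ->
  forall D, measurable D -> factorizes [eta C with j0 |-> D].
Proof.
move=> mC fact_boxes; rewrite /factorizes.
have mblock j : measurable_fun setT (block j).
  by apply: measurable_fun_mktuple => k; case: iidZ.
have msample : measurable_fun setT sample.
  by apply: measurable_fun_mktuple => k; case: iidW.
pose E := \bigcap_(j in [set j | j != j0]) (block j @^-1` C j).
have mE : measurable E.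
  apply: fin_bigcap_measurable => [|j _]; first exact: finite_finset.
  by rewrite -[X in measurable X]setTI; exact: mblock.
have capE D : \bigcap_(j in [set: 'I_m]) (block j @^-1` [eta C with j0 |-> D] j) =
    block j0 @^-1` D `&` E.
  apply/seteqP; split => w /= wC.
    split => [|j /= /negbTE jj0]; first by move: (wC j0 I); rewrite eqxx.
    by move: (wC j I); rewrite jj0.
  by move=> j _; case: ifPn => [/eqP ->|jj0]; [case: wC|case: wC => _; apply].
have prodE D : (\prod_(j < m) P (sample @^-1` [eta C with j0 |-> D] j) =
    P (sample @^-1` D) * \prod_(j < m | j != j0) P (sample @^-1` C j))%E.
  by rewrite (bigD1 j0) //= eqxx; congr (_ * _)%E; apply: eq_bigr => j /negbTE ->.
have PE : P E = (\prod_(j < m | j != j0) P (sample @^-1` C j))%E.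
  have := fact_boxes setT boxesT.
  by rewrite /factorizes capE prodE preimage_setT setTI probability_setT mul1e.
have PE_ge0 : 0 <= fine (P E) by rewrite fine_ge0.
have restrE D : measurable D ->
    P (block j0 @^-1` D `&` E) = ((fine (P E))%:E * P (sample @^-1` D))%E.
  apply: (finite_measure_tuple_unique
    (mu := pushforward (mrestr P mE) (block j0))
    (nu := mscale (NngNum PE_ge0) (pushforward P sample))).
  - move=> B /set_mem BB.
    change (P (block j0 @^-1` B `&` E) = (fine (P E))%:E * P (sample @^-1` B))%E.
    move: (fact_boxes B BB); rewrite /factorizes capE prodE -PE => ->.
    by rewrite fineK ?fin_num_measure // muleC.
  - by rewrite /= /pushforward /mrestr preimage_setT setTI ltey_eq fin_num_measure.
move=> D mD; rewrite capE prodE -PE restrE // fineK ?fin_num_measure //.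
by rewrite muleC.
Qed.

Lemma blocks_independent (C : 'I_m -> set (N.-tuple S)) :
  (forall j, measurable (C j)) -> factorizes C.
Proof.
suff boxes_from a : (a <= m)%N -> forall C, (forall j, measurable (C j)) ->
    (forall j : 'I_m, (a <= j)%N -> boxes (C j)) -> factorizes C.
  by move=> mC; apply: (boxes_from m) => // j; rewrite leqNgt ltn_ord.
elim: a => [_ {}C _ bC|a IH a_lt_m {}C mC bC].
  have /boolp.choice[A /all_and2[mA CA]] : forall j, exists A : 'I_N -> set S,
      (forall k, measurable (A k)) /\ C j = box A.
    by move=> j; have [A mA ->] := bC j (leq0n _); exists A.
  by rewrite (funext CA); exact: blocks_factorize_boxes.
pose j0 : 'I_m := Ordinal a_lt_m.
have -> : C = [eta C with j0 |-> C j0].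
  by apply: funext => j /=; case: eqP => // ->.
apply: factorizes_update => // D BD; apply: IH => [|j|j a_le_j] /=.
- exact: ltnW.
- by case: ifP => // _; case: BD => A mA ->; exact: measurable_box.
- case: eqP => // /eqP j_ne_j0; apply: bC.
  rewrite ltn_neqAle a_le_j andbT; apply: contra j_ne_j0 => /eqP a_j.
  by apply/eqP/val_inj; rewrite /= -a_j.
Qed.

Lemma blocks_joint_prob (C : set (N.-tuple S)) (J : {set 'I_m}) :
  measurable C ->
  P (\bigcap_(j in [set j | j \in J]) (block j @^-1` C)) =
  (\prod_(j in J) P (sample @^-1` C))%E.
Proof.
move=> mC; pose CJ j := if j \in J then C else setT.
have mCJ j : measurable (CJ j) by rewrite /CJ; case: ifP.
have -> : \bigcap_(j in [set j | j \in J]) (block j @^-1` C) =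
    \bigcap_(j in [set: 'I_m]) (block j @^-1` CJ j).
  apply/seteqP; split => w /= wC j; rewrite /CJ.
    by move=> _; case: ifPn => // jJ; exact: wC.
  by move=> jJ; move: (wC j I); rewrite /CJ jJ.
rewrite (@blocks_independent CJ mCJ) [RHS]big_mkcond /=.
apply: eq_bigr => j _; rewrite /CJ.
by case: ifP => // _; rewrite preimage_setT probability_setT.
Qed.

End iid_blocks.

Lemma upclosed_median (R : realType) (s : seq R) (a : pred R) :
  (0 < size s)%N -> (forall x y, x <= y -> a x -> a y) ->
  a (median s) = ((size s)./2 < count a s)%N.
Proof.
move=> s_gt0 a_up; rewrite /median.
set u := sort <=%R s; set q := (uphalf (size s)).-1.
have su : size u = size s by rewrite size_sort.
have cu : count a u = count a s by apply/permP; rewrite perm_sort.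
have q_lt : (q < size s)%N by rewrite /q uphalfE -divn2; lia.
have u_mono i j : (i <= j < size u)%N -> nth 0 u i <= nth 0 u j.
  move=> /andP[ij js]; apply: (sorted_leq_nth le_trans lexx) => //.
    exact/sort_sorted/le_total.
  by rewrite inE (leq_ltn_trans ij js).
have half_q : (size s)./2 = (size s - q.+1)%N by rewrite /q uphalfE -divn2; lia.
rewrite -cu half_q -[u in count a u](cat_take_drop q.+1 u) count_cat.
case aq: (a (nth 0 u q)).
- have : all a (drop q.+1 u).
    apply/(all_nthP 0) => i; rewrite size_drop nth_drop su => i_lt.
    by apply: a_up aq; apply: u_mono; rewrite su; lia.
  rewrite all_count => /eqP ->; rewrite size_drop su.
  have : (0 < count a (take q.+1 u))%N.
    rewrite -has_count; apply/hasP; exists (nth 0 u q) => //.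
    by rewrite -(nth_take _ (ltnSn q)) mem_nth // size_takel ?su.
  lia.
- have -> : count a (take q.+1 u) = 0%N.
    apply/eqP; rewrite -leqn0 leqNgt -has_count; apply/hasPn => y.
    move=> /(nthP 0)[i]; rewrite size_takel ?su // => i_lt <-.
    rewrite nth_take //; apply: contraFN aq; apply: a_up.
    by apply: u_mono; rewrite su; lia.
  have := count_size a (drop q.+1 u); rewrite size_drop su; lia.
Qed.

Lemma median_far_count (R : realType) (s : seq R) (c t : R) :
  (0 < size s)%N -> t <= `|median s - c| ->
  (uphalf (size s) <= count (fun y : R => (t <= `|y - c|)%R) s)%N.
Proof.
move=> s_gt0; rewrite uphalfE -divn2 ler_normr => /orP[far_up|far_down].
- have : ((size s)./2 < count (fun y : R => (c + t <= y)%R) s)%N.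
    rewrite -upclosed_median //; first lra.
    by move=> x y xy /le_trans; apply.
  have : (count (fun y : R => (c + t <= y)%R) s <=
          count (fun y : R => (t <= `|y - c|)%R) s)%N.
    by apply: sub_count => y /= cty; rewrite ler_normr; apply/orP; left; lra.
  rewrite -divn2; lia.
- have : (count (fun y : R => (c - t < y)%R) s <= (size s)./2)%N.
    rewrite leqNgt -upclosed_median //; first by apply/negP; lra.
    by move=> x y xy /lt_le_trans; apply.
  have := count_predC (fun y : R => (c - t < y)%R) s.
  have : (count (predC (fun y : R => (c - t < y)%R)) s <=
          count (fun y : R => (t <= `|y - c|)%R) s)%N.
    by apply: sub_count => y /=; rewrite -leNgt ler_normr => yct; apply/orP; right; lra.
  rewrite -divn2; lia.
Qed.

Section median_measurability.
Context {dT : measure_display} {T : measurableType dT}.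

Lemma measurable_count (I : Type) (l : seq I) (Q : I -> T -> bool) c :
  (forall i, measurable [set w | Q i w]) ->
  measurable [set w | (c <= count (Q ^~ w) l)%N].
Proof.
move=> mQ; elim: l c => [|i l IH] c /=.
  have -> : [set w : T | (c <= 0)%N] = if (c <= 0)%N then setT else set0.
    by apply/seteqP; split => w; case: leqP.
  by case: ifP.
have -> : [set w | (c <= Q i w + count (Q ^~ w) l)%N] =
    [set w | Q i w] `&` [set w | (c.-1 <= count (Q ^~ w) l)%N] `|`
    [set w | (c <= count (Q ^~ w) l)%N].
  by apply/seteqP; split => w /=; case: (Q i w) => /=; lia.
by apply: measurableU; [apply: measurableI; [exact: mQ|]|]; exact: IH.
Qed.

Context {R : realType}.

Lemma measurable_fun_median (I : Type) (s : seq I) (Y : I -> T -> R) :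
  (forall i, measurable_fun setT (Y i)) ->
  measurable_fun setT (fun w => median [seq Y i w | i <- s]).
Proof.
move=> mY; case: s => [|i0 s]; first exact: measurable_cst.
apply: (measurability _ (RGenCInfty.measurableE R)) => _ [_ [a ->] <-].
rewrite setTI preimage_itvcy.
have -> : [set w | a <= median [seq Y i w | i <- i0 :: s]] =
    [set w | ((size (i0 :: s))./2 < count (fun i => (a <= Y i w)%R) (i0 :: s))%N].
  apply: eq_set => w; rewrite upclosed_median ?size_map ?count_map //.
  by move=> x y /[swap] /le_trans; apply.
apply: measurable_count => i.
by have := mY i measurableT _ (measurable_itv `[a, +oo[); rewrite setTI preimage_itvcy.
Qed.

Lemma measurable_deviation (f : T -> R) (c t : R) :
  measurable_fun setT f -> measurable [set w | t <= `|f w - c|].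
Proof.
move=> mf; have mdev : measurable_fun setT (fun w => `|f w - c|).
  by apply: measurableT_comp => //; apply: measurable_funB => //; exact: measurable_cst.
by have := mdev measurableT _ (measurable_itv `[t, +oo[); rewrite setTI preimage_itvcy.
Qed.

End median_measurability.

Lemma measure_fin_subadditive {dT} {T : measurableType dT} {R : realType}
    (mu : {measure set T -> \bar R}) (I : finType) (A : I -> set T) (X : set T) :
  (forall i, measurable (A i)) -> measurable X -> X `<=` \bigcup_i A i ->
  (mu X <= \sum_(i : I) mu (A i))%E.
Proof.
move=> mA mX XA; have finI : finite_set [set: I] by exact: finite_finset.
apply: le_trans (content_sub_fsum _ finI _ mX XA) _ => //.
rewrite fsbig_finite // (perm_big (enum I)) ?big_enum //=.
apply: uniq_perm; [exact: fset_uniq|exact: enum_uniq|] => i.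
by rewrite mem_enum in_fset_set // (@mem_set _ setT).
Qed.

Lemma card_set_count (I : finType) (a : pred I) :
  #|[set i | a i]%SET| = count a (enum I).
Proof.
rewrite cardsE cardE -size_filter /enum_mem -filter_predI.
by congr size; apply: eq_filter => i /=; rewrite andbT.
Qed.

Lemma median_deviation_le {dT} {T : measurableType dT} {R : realType}
    (mu : {measure set T -> \bar R}) (m : nat) (Y : 'I_m -> T -> R) (c t p : R) :
  (0 < m)%N -> (forall j, measurable_fun setT (Y j)) -> 0 <= p <= 1 ->
  (forall J : {set 'I_m},
    mu (\bigcap_(j in [set j | j \in J]) [set w | (t <= `|Y j w - c|)%R]) <=
    (p ^+ #|J|)%:E)%E ->
  (mu [set w | (t <= `|median [seq Y j w | j <- enum 'I_m] - c|)%R] <=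
    (2 ^+ m * p ^+ uphalf m)%:E)%E.
Proof.
move=> m_gt0 mY /andP[p_ge0 p_le1] joint_far.
pose far j := [set w | t <= `|Y j w - c|].
pose B (J : {set 'I_m}) :=
  if (uphalf m <= #|J|)%N then \bigcap_(j in [set j | j \in J]) far j else set0.
have mB J : measurable (B J).
  rewrite /B; case: ifP => // _; apply: fin_bigcap_measurable => [|j _].
    exact: finite_finset.
  exact: measurable_deviation.
have mM := measurable_deviation c t (measurable_fun_median (enum 'I_m) mY).
apply: le_trans (measure_fin_subadditive mu mB mM _) _.
  move=> w Mw; exists [set j | t <= `|Y j w - c|]%SET => //.
  rewrite /B ifT => [j /= /[!inE] //|].
  have := @median_far_count R [seq Y j w | j <- enum 'I_m] c t.
  by rewrite size_map size_enum_ord count_map card_set_count; apply.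
have B_le J : (mu (B J) <= (p ^+ uphalf m)%:E)%E.
  rewrite /B; case: ifPn => [k_le|_]; last by rewrite measure0 lee_fin exprn_ge0.
  by apply: le_trans (joint_far J) _; rewrite lee_fin ler_wiXn2l.
apply: le_trans (lee_sum _ (fun J _ => B_le J)) _.
rewrite sumEFin sumr_const lee_fin -cardsT -powersetT card_powerset cardsT card_ord.
by rewrite -[_ *+ _]mulr_natr natrX mulrC.
Qed.

Lemma exprn_le_powR (R : realType) (p a : R) (k : nat) :
  0 <= p <= 1 -> 0 < a -> a <= k%:R -> p ^+ k <= p `^ a.
Proof.
move=> /andP[p_ge0 p_le1] a_gt0 a_le_k; rewrite -powR_mulrn //.
have [->|p_neq0] := eqVneq p 0.
  by rewrite !powR0 ?gt_eqF // (lt_le_trans a_gt0).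
by apply: ger_powR => //; rewrite lt_neqAle eq_sym p_neq0 p_ge0.
Qed.

Theorem lemma2p1 (R : realType) (dT : measure_display) (T : measurableType dT)
  (P : probability T R) (d n m : nat)
  (XY : T -> obs R d) (Dn : 'I_n -> T -> obs R d)
  (r : d.-tuple R -> R)
  (blk : 'I_m -> 'I_(n %/ m) -> 'I_n)
  (rN : d.-tuple R -> (n %/ m).-tuple (obs R d) -> R)
  (DN : 'I_(n %/ m) -> T -> obs R d) :
  (1 <= d)%N -> (1 <= m <= n)%N ->
  measurable_fun setT XY ->
  P.-integrable setT (fun w => ((XY w).2 ^+ 2)%:E) ->
  is_regression_function P XY r ->
  iid_copies P Dn XY ->
  (forall j k j' k', blk j k = blk j' k' -> j = j' /\ k = k') ->
  (forall x, measurable_fun setT (rN x)) ->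
  iid_copies P DN XY ->
  forall (x : d.-tuple R) (t : R), 0 <= t ->
    fine (P [set w | t <= `| mom rN (fun j w => [tuple Dn (blk j k) w | k < n %/ m]) x w - r x |])
    <= 2 ^+ m * (fine (P [set w | t <= `| rN x [tuple DN k w | k < n %/ m] - r x |])) `^ (m%:R / 2).
Proof.
move=> _ /andP[m_gt0 _] _ _ _ iidDn blk_inj mrN iidDN x t _.
pose block j w := [tuple Dn (blk j k) w | k < n %/ m].
pose sample w := [tuple DN k w | k < n %/ m].
pose C := [set z | t <= `|rN x z - r x|].
have mC : measurable C := measurable_deviation (r x) t (mrN x).
have msample : measurable (sample @^-1` C).
  rewrite -[X in measurable X]setTI; apply: measurable_fun_mktuple => //.
  by move=> k; case: iidDN.
set p := fine (P (sample @^-1` C)).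
have PC : P (sample @^-1` C) = p%:E by rewrite fineK ?fin_num_measure.
have p01 : 0 <= p <= 1.
  by rewrite -!lee_fin -PC measure_ge0 probability_le1.
have mY j : measurable_fun setT (fun w => rN x (block j w)).
  apply: measurableT_comp (mrN x) (measurable_fun_mktuple _) => k.
  by case: iidDn.
have joint (J : {set 'I_m}) : (P (\bigcap_(j in [set j | j \in J])
    [set w | (t <= `|rN x (block j w) - r x|)%R]) <= (p ^+ #|J|)%:E)%E.
  rewrite [X in P X](_ : _ = \bigcap_(j in [set j | j \in J]) (block j @^-1` C)) //.
  rewrite (blocks_joint_prob iidDn iidDN blk_inj J mC).
  by under eq_bigr do rewrite PC; rewrite prodEFin prodr_const.
have := median_deviation_le (mu := P) (c := r x) (t := t) m_gt0 mY p01 joint.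
have mM := measurable_deviation (r x) t (measurable_fun_median (enum 'I_m) mY).
rewrite -lee_fin fineK ?fin_num_measure // => /le_trans; apply.
rewrite lee_fin ler_wpM2l ?exprn_ge0 ?exprn_le_powR ?divr_gt0 ?ltr0n //.
by rewrite ler_pdivrMr // -natrM ler_nat uphalfE -divn2; lia.
Qed.
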